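(* If $K_1$ and $K_2$ are long virtual knots obtained from one another by a finite sequence of extended Reidemeister moves and band-pass moves, then $$v_{2,1}(K_1)+v_{2,2}(K_1)\equiv v_{2,1}(K_2)+v_{2,2}(K_2)\pmod 2.$$
   Context: Long virtual knots are immersions $\mathbb{R}\to\mathbb{R}^2$ agreeing with the $x$-axis outside a compact set, with double points marked classical or virtual, oriented from $-\infty$ to $\infty$, considered up to the extended Reidemeister moves (classical Reidemeister moves and the detour move). A band-pass move is the local move in which, inside a disk, one band (a pair of parallel strands of opposite orientation) crosses another such band at four classical crossings with the first band passing entirely over the second, and this is replaced by the configuration where the first band passes entirely under the second (both orientation versions of this move are allowed). Gauss diagram $D_K$ of a long virtual knot: the real line with one arrow for each classical crossing joining its two preimages, pointing from the overcrossing preimage to the undercrossing preimage, labeled with the local writhe sign $\pm1$. The Goussarov–Polyak–Viro degree-two invariants $v_{2,1},v_{2,2}$ are defined as follows: for each unordered pair of arrows $\{a,b\}$ of $D_K$ whose four endpoints $p_1<p_2<p_3<p_4$ on $\mathbb{R}$ satisfy that $a$ joins $p_1,p_3$ and $b$ joins $p_2,p_4$, the pair contributes $\mathrm{sign}(a)\,\mathrm{sign}(b)$ to $v_{2,1}(K)$ if $a$ points $p_1\to p_3$ and $b$ points $p_4\to p_2$, and contributes $\mathrm{sign}(a)\,\mathrm{sign}(b)$ to $v_{2,2}(K)$ if $a$ points $p_3\to p_1$ and $b$ points $p_2\to p_4$; other pairs contribute nothing. (Only the sum $v_{2,1}+v_{2,2}$ enters the statement.) *)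

(* Long virtual knots are represented by their Gauss diagrams
   (Goussarov-Polyak-Viro): a long Gauss diagram is a word on the real line
   listing the preimages of the classical crossings in order from -oo to +oo.
   Virtual crossings and the detour move are invisible on Gauss diagrams; the
   classical Reidemeister moves and the band-pass move become the local word
   moves defined below (each one is exactly the Gauss-diagram image of the
   corresponding diagrammatic move). *)
From mathcomp Require Import all_boot all_algebra.
Set Implicit Arguments. Unset Strict Implicit. Unset Printing Implicit Defensive.
Import GRing.Theory Num.Theory.
Local Open Scope ring_scope.

(* An endpoint of an arrow: (label of the arrow, is_tail, sign).
   is_tail = true : the overcrossing preimage (the arrow points away from it);
   sign = true : local writhe +1, sign = false : local writhe -1. *)
Definition letter := (nat * bool * bool)%type.
Definition lab (x : letter) : nat := x.1.1.
Definition is_tail (x : letter) : bool := x.1.2.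
Definition sgnb (x : letter) : bool := x.2.

Definition gword := seq letter.

Definition pm (b : bool) : int := if b then 1 else -1.

Definition gauss_wf (W : gword) : Prop :=
  forall a : nat,
    count (fun x => lab x == a) W = 0%N \/
    exists s : bool,
      [/\ count (pred1 (a, true, s)) W = 1%N,
          count (pred1 (a, false, s)) W = 1%N &
          count (fun x => lab x == a) W = 2%N].

Definition pair2 (p : bool) (x y : letter) : gword :=
  if p then [:: x; y] else [:: y; x].

Definition R1_move (W1 W2 : gword) : Prop :=
  exists (u v : gword) (a : nat) (t s : bool),
    W1 = u ++ [:: (a, t, s); (a, ~~ t, s)] ++ v /\ W2 = u ++ v.

Definition R2_move (W1 W2 : gword) : Prop :=
  exists (u v w : gword) (a b : nat) (tau s p q : bool),
    a != b /\
    W1 = u ++ pair2 p (a, tau, s) (b, tau, ~~ s) ++ v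
           ++ pair2 q (a, ~~ tau, s) (b, ~~ tau, ~~ s) ++ w /\
    W2 = u ++ v ++ w.

(* Reidemeister III: three arrows x : T -> M, y : T -> B, z : M -> B (top,
   middle, bottom strand) with endpoints in three segments of two adjacent
   letters (one segment per strand, appearing in any order along the line).  The local
   configuration is realizable by an actual triangle iff
     oT*oM*eps(x) = oT*oB*eps(y) = oM*oB*eps(z)
   where oT = +1 iff on T the crossing x comes before y, oM = +1 iff on M the
   crossing x comes before z, oB = +1 iff on B the crossing y comes before z. *)
Definition R3_move (W1 W2 : gword) : Prop :=
  exists (x y z : nat) (sx sy sz oT oM oB : bool)
         (X1 X2 X3 : gword) (u0 u1 u2 u3 : gword),
    uniq [:: x; y; z] /\
    pm oT * pm oM * pm sx = pm oT * pm oB * pm sy /\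
    pm oT * pm oB * pm sy = pm oM * pm oB * pm sz /\
    perm_eq [:: X1; X2; X3]
      [:: pair2 oT (x, true, sx) (y, true, sy);
          pair2 oM (x, false, sx) (z, true, sz);
          pair2 oB (y, false, sy) (z, false, sz)] /\
    W1 = u0 ++ X1 ++ u1 ++ X2 ++ u2 ++ X3 ++ u3 /\
    W2 = u0 ++ rev X1 ++ u1 ++ rev X2 ++ u2 ++ rev X3 ++ u3.

(* reversing an arrow and negating its sign (over/under swapped) *)
Definition flip (l : letter) : letter := (lab l, ~~ is_tail l, ~~ sgnb l).

(* Band-pass move: band A = strands A1, A2 (antiparallel), band B = strands
   B1, B2 (antiparallel); arrow x_ij points from A_i to B_j (A over B).  Antiparallelism: A1 meets B1 first iff A2
   meets B2 first (p), B1 meets A1 first iff B2 meets A2 first (q).  The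
   realizable signs are eps(x11) = eps(x22) = -eps(x12) = -eps(x21) (both
   values of s occur, covering both orientation versions of the move).  The
   move keeps the planar picture and passes A under B: every one of the four
   arrows is reversed and its sign negated. *)
Definition bandpass_move (W1 W2 : gword) : Prop :=
  exists (x11 x12 x21 x22 : nat) (s p q : bool)
         (X1 X2 X3 X4 : gword) (u0 u1 u2 u3 u4 : gword),
    uniq [:: x11; x12; x21; x22] /\
    perm_eq [:: X1; X2; X3; X4]
      [:: pair2 p (x11, true, s) (x12, true, ~~ s);
          pair2 (~~ p) (x21, true, ~~ s) (x22, true, s);
          pair2 q (x11, false, s) (x21, false, ~~ s);
          pair2 (~~ q) (x12, false, ~~ s) (x22, false, s)] /\
    W1 = u0 ++ X1 ++ u1 ++ X2 ++ u2 ++ X3 ++ u3 ++ X4 ++ u4 /\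
    W2 = u0 ++ map flip X1 ++ u1 ++ map flip X2 ++ u2 ++ map flip X3
            ++ u3 ++ map flip X4 ++ u4.

Definition relabel_move (W1 W2 : gword) : Prop :=
  exists f : nat -> nat, injective f /\
    W2 = map (fun l => (f (lab l), is_tail l, sgnb l)) W1.

Definition elem_move (W1 W2 : gword) : Prop :=
  relabel_move W1 W2 \/ R1_move W1 W2 \/ R2_move W1 W2 \/ R3_move W1 W2
  \/ bandpass_move W1 W2.

Definition move_step (W1 W2 : gword) : Prop :=
  [/\ gauss_wf W1, gauss_wf W2 & (elem_move W1 W2 \/ elem_move W2 W1)].

Inductive bp_equiv : gword -> gword -> Prop :=
| bp_refl W : bp_equiv W W
| bp_step W1 W2 W3 : move_step W1 W2 -> bp_equiv W2 W3 -> bp_equiv W1 W3.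

Definition dlet : letter := (0%N, false, false).

Definition v21 (W : gword) : int :=
  \sum_(i < size W) \sum_(j < size W) \sum_(k < size W) \sum_(l < size W)
    if [&& (i < j)%N, (j < k)%N, (k < l)%N,
           lab (nth dlet W i) == lab (nth dlet W k),
           lab (nth dlet W j) == lab (nth dlet W l),
           is_tail (nth dlet W i) & is_tail (nth dlet W l)]
    then pm (sgnb (nth dlet W i)) * pm (sgnb (nth dlet W j)) else 0.

Definition v22 (W : gword) : int :=
  \sum_(i < size W) \sum_(j < size W) \sum_(k < size W) \sum_(l < size W)
    if [&& (i < j)%N, (j < k)%N, (k < l)%N,
           lab (nth dlet W i) == lab (nth dlet W k),
           lab (nth dlet W j) == lab (nth dlet W l),
           is_tail (nth dlet W k) & is_tail (nth dlet W j)]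
    then pm (sgnb (nth dlet W i)) * pm (sgnb (nth dlet W j)) else 0.

(* Mark each endpoint of an arrow with the direction of that arrow (true when
   its tail comes first on the line).  Modulo 2, v21 + v22 counts the interlaced
   pairs of arrows of opposite directions, and so does the parity [phi] of the
   number of positions i < j marked true and false respectively: two arrows of
   opposite directions give an odd number of such pairs of positions exactly when
   they are interlaced.  The parity [phi] is invariant under all moves.  R1 and R2
   delete adjacent equal marks.  R3 reverses, and the band-pass move negates, the
   marks inside 2-letter blocks that together contain both endpoints of every
   arrow involved; each block changes [phi] by the sum of its two marks, and these
   sums cancel. *)

From mathcomp Require Import all_boot all_algebra zify.
Import GRing.Theory Num.Theory.

Set Implicit Arguments.
Unset Strict Implicit.
Unset Printing Implicit Defensive.

(** * Parity of sums over increasing positions *)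

Section IncreasingSums.

Local Open Scope ring_scope.

Definition incr_sum1 (K : letter -> int) (W : gword) : int :=
  \sum_(0 <= l < size W) K (nth dlet W l).

Definition incr_sum2 (H : letter -> letter -> int) (W : gword) : int :=
  \sum_(0 <= k < size W) \sum_(0 <= l < size W)
    if (k < l)%N then H (nth dlet W k) (nth dlet W l) else 0.

Definition incr_sum3 (G : letter -> letter -> letter -> int) (W : gword) : int :=
  \sum_(0 <= j < size W) \sum_(0 <= k < size W) \sum_(0 <= l < size W)
    if [&& (j < k)%N & (k < l)%N]
    then G (nth dlet W j) (nth dlet W k) (nth dlet W l) else 0.

Definition incr_sum4 (F : letter -> letter -> letter -> letter -> int) (W : gword) :
    int :=
  \sum_(0 <= i < size W) \sum_(0 <= j < size W) \sum_(0 <= k < size W)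
    \sum_(0 <= l < size W)
    if [&& (i < j)%N, (j < k)%N & (k < l)%N]
    then F (nth dlet W i) (nth dlet W j) (nth dlet W k) (nth dlet W l) else 0.

Lemma incr_sum1_cons K x W : incr_sum1 K (x :: W) = K x + incr_sum1 K W.
Proof. by rewrite /incr_sum1 /= big_nat_recl. Qed.

Lemma incr_sum2_cons H x W :
  incr_sum2 H (x :: W) = incr_sum1 (H x) W + incr_sum2 H W.
Proof.
rewrite /incr_sum2 /= big_nat_recl //; congr (_ + _).
  by rewrite big_nat_recl // ?ltn0 ?andbF ?andFb add0r.
by apply: eq_bigr => k _; rewrite big_nat_recl // ?ltn0 ?andbF ?andFb add0r.
Qed.

Lemma incr_sum3_cons G x W :
  incr_sum3 G (x :: W) = incr_sum2 (G x) W + incr_sum3 G W.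
Proof.
rewrite /incr_sum3 /= big_nat_recl //; congr (_ + _).
  rewrite big_nat_recl // big1 ?add0r //.
  by apply: eq_bigr => k _; rewrite big_nat_recl // ?ltn0 ?andbF ?andFb add0r.
apply: eq_bigr => j _; rewrite big_nat_recl // big1 ?add0r; last first.
  by move=> l _; rewrite ?ltn0 ?andbF.
by apply: eq_bigr => k _; rewrite big_nat_recl // ?ltn0 ?andbF ?andFb add0r.
Qed.

Lemma incr_sum4_cons F x W :
  incr_sum4 F (x :: W) = incr_sum3 (F x) W + incr_sum4 F W.
Proof.
rewrite /incr_sum4 /= big_nat_recl //; congr (_ + _).
  rewrite big_nat_recl // big1 ?add0r; last by move=> k _; rewrite big1.
  apply: eq_bigr => j _; rewrite big_nat_recl // big1 ?add0r //.
  by apply: eq_bigr => k _; rewrite big_nat_recl // ?ltn0 ?andbF ?andFb add0r.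
apply: eq_bigr => i _; rewrite big_nat_recl // big1 ?add0r; last first.
  by move=> k _; rewrite big1.
apply: eq_bigr => j _; rewrite big_nat_recl // big1 ?add0r; last first.
  by move=> l _; rewrite ?ltn0 ?andbF.
by apply: eq_bigr => k _; rewrite big_nat_recl // ?ltn0 ?andbF ?andFb add0r.
Qed.

Definition oddz (z : int) : bool := ~~ (2 %| z)%Z.

Lemma oddzD a b : oddz (a + b) = oddz a (+) oddz b.
Proof.
by rewrite /oddz; case: (boolP (2 %| a)%Z); case: (boolP (2 %| b)%Z) => /= ? ?; lia.
Qed.

Lemma oddz_eq_mod2 a b : oddz a = oddz b -> (a = b %[mod 2])%Z.
Proof.
by rewrite /oddz; case: (boolP (2 %| a)%Z); case: (boolP (2 %| b)%Z) => //= ? ? _; lia.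
Qed.

Definition incr_xor1 (K : letter -> bool) (W : gword) : bool := odd (count K W).

Fixpoint incr_xor2 (H : letter -> letter -> bool) (W : gword) : bool :=
  if W is x :: W' then incr_xor1 (H x) W' (+) incr_xor2 H W' else false.

Fixpoint incr_xor3 (G : letter -> letter -> letter -> bool) (W : gword) : bool :=
  if W is x :: W' then incr_xor2 (G x) W' (+) incr_xor3 G W' else false.

Fixpoint incr_xor4 (F : letter -> letter -> letter -> letter -> bool) (W : gword) :
    bool :=
  if W is x :: W' then incr_xor3 (F x) W' (+) incr_xor4 F W' else false.

Lemma oddz_incr_sum1 K k W : (forall a, oddz (K a) = k a) ->
  oddz (incr_sum1 K W) = incr_xor1 k W.
Proof.
move=> Kk; elim: W => [|x W IH]; first by rewrite /incr_sum1 big_geq.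
by rewrite incr_sum1_cons oddzD IH Kk /incr_xor1 /= oddD oddb.
Qed.

Lemma oddz_incr_sum2 H h W : (forall a b, oddz (H a b) = h a b) ->
  oddz (incr_sum2 H W) = incr_xor2 h W.
Proof.
move=> Hh; elim: W => [|x W IH]; first by rewrite /incr_sum2 big_geq.
by rewrite incr_sum2_cons oddzD IH (oddz_incr_sum1 _ (Hh x)).
Qed.

Lemma oddz_incr_sum3 G g W : (forall a b c, oddz (G a b c) = g a b c) ->
  oddz (incr_sum3 G W) = incr_xor3 g W.
Proof.
move=> Gg; elim: W => [|x W IH]; first by rewrite /incr_sum3 big_geq.
by rewrite incr_sum3_cons oddzD IH (oddz_incr_sum2 _ (Gg x)).
Qed.

Lemma oddz_incr_sum4 F f W : (forall a b c d, oddz (F a b c d) = f a b c d) ->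
  oddz (incr_sum4 F W) = incr_xor4 f W.
Proof.
move=> Ff; elim: W => [|x W IH]; first by rewrite /incr_sum4 big_geq.
by rewrite incr_sum4_cons oddzD IH (oddz_incr_sum3 _ (Ff x)).
Qed.

Definition v21_summand (a b c d : letter) : int :=
  if [&& lab a == lab c, lab b == lab d, is_tail a & is_tail d]
  then pm (sgnb a) * pm (sgnb b) else 0.

Definition v22_summand (a b c d : letter) : int :=
  if [&& lab a == lab c, lab b == lab d, is_tail c & is_tail b]
  then pm (sgnb a) * pm (sgnb b) else 0.

Lemma v21_add_v22 W : v21 W + v22 W =
  incr_sum4 (fun a b c d => v21_summand a b c d + v22_summand a b c d) W.
Proof.
rewrite /v21 /v22 /incr_sum4 -big_split big_mkord; apply: eq_bigr => i _.
rewrite -big_split big_mkord; apply: eq_bigr => j _.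
rewrite -big_split big_mkord; apply: eq_bigr => k _.
rewrite -big_split big_mkord; apply: eq_bigr => l _.
by case: (i < j)%N; case: (j < k)%N; case: (k < l)%N; rewrite ?addr0.
Qed.

Definition v2_kernel (a b c d : letter) : bool :=
  [&& lab a == lab c, lab b == lab d &
      (is_tail a && is_tail d) (+) (is_tail c && is_tail b)].

Lemma oddz_v2 W : oddz (v21 W + v22 W) = incr_xor4 v2_kernel W.
Proof.
rewrite v21_add_v22; apply: oddz_incr_sum4 => a b c d.
have oddz_pm s s' : oddz (pm s * pm s') by case: s; case: s'.
rewrite oddzD /v21_summand /v22_summand /v2_kernel.
by case: (lab a == lab c); case: (lab b == lab d);
  case: (is_tail a && is_tail d); case: (is_tail c && is_tail b); rewrite /= ?oddz_pm.
Qed.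

End IncreasingSums.

Lemma incr_xor1_eq0 K W : {in W, forall y, K y = false} -> incr_xor1 K W = false.
Proof. by move=> K0; rewrite /incr_xor1 (eq_in_count K0) count_pred0. Qed.

Lemma incr_xor2_eq0 H W :
  {in W &, forall y y', H y y' = false} -> incr_xor2 H W = false.
Proof.
elim: W => //= y W IH H0; rewrite incr_xor1_eq0 ?IH // => [y1 y2 W1 W2|y' W'].
  by apply: H0; rewrite inE ?W1 ?W2 orbT.
by apply: H0; rewrite inE ?eqxx ?W' ?orbT.
Qed.

Lemma incr_xor3_eq0 G W :
  {in W & W & W, forall y y' y'', G y y' y'' = false} -> incr_xor3 G W = false.
Proof.
elim: W => //= y W IH G0.
rewrite incr_xor2_eq0 ?IH // => [y1 y2 y3 W1 W2 W3|y' y'' W' W''].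
  by apply: G0; rewrite inE ?W1 ?W2 ?W3 orbT.
by apply: G0; rewrite inE ?eqxx ?W' ?W'' ?orbT.
Qed.

Section DropLetter.

Variables (D : pred letter) (z : letter).

Lemma incr_xor2_drop H u v : all D (u ++ v) ->
  {in D, forall c, H z c = false} -> {in D, forall b, H b z = false} ->
  incr_xor2 H (u ++ z :: v) = incr_xor2 H (u ++ v).
Proof.
move=> Duv Hz1 Hz2; elim: u Duv => [|y u IH] /= Duv.
  by rewrite incr_xor1_eq0 // => c vc; apply: Hz1; apply: (allP Duv).
by case/andP: Duv => Dy Duv; rewrite IH // /incr_xor1 !count_cat /= Hz2.
Qed.

Lemma incr_xor3_drop G u v : all D (u ++ v) ->
  {in D &, forall b c, G z b c = false} -> {in D &, forall b c, G b z c = false} ->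
  {in D &, forall b c, G b c z = false} ->
  incr_xor3 G (u ++ z :: v) = incr_xor3 G (u ++ v).
Proof.
move=> Duv Gz1 Gz2 Gz3; elim: u Duv => [|y u IH] /= Duv.
  by rewrite incr_xor2_eq0 // => b c vb vc; apply: Gz1; apply: (allP Duv).
case/andP: Duv => Dy Duv; rewrite IH // incr_xor2_drop // => c Dc.
  exact: Gz2.
exact: Gz3.
Qed.

Lemma incr_xor4_drop F u v : all D (u ++ v) ->
  {in D & D & D, forall a b c, F z a b c = false} ->
  {in D & D & D, forall a b c, F a z b c = false} ->
  {in D & D & D, forall a b c, F a b z c = false} ->
  {in D & D & D, forall a b c, F a b c z = false} ->
  incr_xor4 F (u ++ z :: v) = incr_xor4 F (u ++ v).
Proof.
move=> Duv Fz1 Fz2 Fz3 Fz4; elim: u Duv => [|y u IH] /= Duv.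
  by rewrite incr_xor3_eq0 // => a b c va vb vc; apply: Fz1; apply: (allP Duv).
case/andP: Duv => Dy Duv; rewrite IH // incr_xor3_drop // => b c Db Dc.
- exact: Fz2.
- exact: Fz3.
exact: Fz4.
Qed.

End DropLetter.

Lemma incr_xor2_pivot H u z v :
  {in u, forall c d, H c d = false} -> {in v &, forall c d, H c d = false} ->
  incr_xor2 H (u ++ z :: v) = incr_xor1 (H z) v.
Proof.
elim: u => [|y u IH] /= Hu Hv; first by rewrite incr_xor2_eq0 ?addbF.
rewrite incr_xor1_eq0 => [|d _]; last by apply: Hu; rewrite mem_head.
by rewrite IH // => c d uc; apply: Hu; rewrite inE; apply/orP; right.
Qed.

(** * Parity of inversions of a boolean word *)

Fixpoint inv_parity (S : seq bool) : bool :=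
  if S is b :: S' then (b && odd (count negb S')) (+) inv_parity S' else false.

Lemma inv_parity_cat S T : inv_parity (S ++ T) =
  inv_parity S (+) inv_parity T (+) (odd (count id S) && odd (count negb T)).
Proof.
elim: S => [|b S IH] /=; first by rewrite addbF.
rewrite IH count_cat !oddD /=.
move: (odd (count negb S)) (odd (count negb T)) (odd (count id S)).
by case: b; do 3!case; case: (inv_parity S); case: (inv_parity T).
Qed.

Lemma inv_parity_dup A d B : inv_parity (A ++ d :: d :: B) = inv_parity (A ++ B).
Proof.
rewrite !inv_parity_cat /= !oddD.
move: (odd (count negb B)) (odd (count id A)) (inv_parity A) (inv_parity B).
by case: d; do 4!case.
Qed.

Lemma inv_parity_swap2 A a b B :
  inv_parity (A ++ [:: b; a] ++ B) = inv_parity (A ++ [:: a; b] ++ B) (+) (a (+) b).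
Proof.
rewrite !inv_parity_cat /= !oddD.
move: (odd (count negb B)) (odd (count id A)) (inv_parity A) (inv_parity B).
by case: a; case: b; do 4!case.
Qed.

Lemma inv_parity_negb2 A a b B :
  inv_parity (A ++ [:: ~~ a; ~~ b] ++ B) =
  inv_parity (A ++ [:: a; b] ++ B) (+) (a (+) b).
Proof.
rewrite !inv_parity_cat /= !oddD.
move: (odd (count negb B)) (odd (count id A)) (inv_parity A) (inv_parity B).
by case: a; case: b; do 4!case.
Qed.

Lemma inv_parity_insert d S T : inv_parity (d :: S ++ d :: T) =
  inv_parity (S ++ T) (+) odd (count (fun b => b (+) d) S).
Proof.
rewrite /= !inv_parity_cat /= !count_cat /= !oddD.
have -> : odd (count (fun b => b (+) d) S) = odd (count (if d then negb else id) S).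
  by case: d; congr odd; apply: eq_count => -[].
case: d => /=;
  move: (odd (count negb S)) (odd (count negb T)) (odd (count id S))
    (inv_parity S) (inv_parity T); by do 5!case.
Qed.

Definition interleave (T : Type) (u0 : seq T) (bs : seq (seq T * seq T)) : seq T :=
  u0 ++ flatten [seq b.1 ++ b.2 | b <- bs].

Lemma interleave_cons (T : Type) (u0 X u : seq T) bs :
  interleave u0 ((X, u) :: bs) = u0 ++ X ++ interleave u bs.
Proof. by rewrite /interleave /= -!catA. Qed.

Lemma map_interleave (T U : Type) (f : T -> U) u0 bs :
  map f (interleave u0 bs) =
  interleave (map f u0) [seq (map f b.1, map f b.2) | b <- bs].
Proof.
elim: bs u0 => [|[X u] bs IH] u0; first by rewrite /interleave /= !cats0.
by rewrite /= !interleave_cons -IH !map_cat.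
Qed.

Lemma filter_interleave (T : Type) (p : pred T) u0 bs :
  filter p (interleave u0 bs) =
  interleave (filter p u0) [seq (filter p b.1, filter p b.2) | b <- bs].
Proof.
elim: bs u0 => [|[X u] bs IH] u0; first by rewrite /interleave /= !cats0.
by rewrite /= !interleave_cons -IH !filter_cat.
Qed.

Lemma count_interleave (T : Type) (p : pred T) u0 bs :
  count p (interleave u0 bs) =
  (count p (flatten (map fst bs)) + count p (u0 ++ flatten (map snd bs)))%N.
Proof.
elim: bs u0 => [|[X u] bs IH] u0; first by rewrite /interleave /= !cats0.
rewrite interleave_cons count_cat [count _ (X ++ _)]count_cat IH /= !count_cat; lia.
Qed.

Lemma map_interleave_in (T : eqType) (U : Type) (f g : T -> U)
    (h : seq U -> seq U) u0 bs :
  {in u0 ++ flatten (map snd bs), f =1 g} ->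
  {in map fst bs, forall X, map f X = h (map g X)} ->
  map f (interleave u0 bs) =
  interleave (map g u0) [seq (h (map g b.1), map g b.2) | b <- bs].
Proof.
move=> fg_gaps fgh_blocks; rewrite map_interleave; congr interleave.
  by apply/eq_in_map => y u0y; apply: fg_gaps; rewrite mem_cat u0y.
apply/eq_in_map => -[X u] bsXu /=; congr pair.
  by apply: fgh_blocks; apply: (map_f fst bsXu).
apply/eq_in_map => y uy; apply: fg_gaps; rewrite mem_cat; apply/orP; right.
by apply/flattenP; exists u => //; apply: (map_f snd bsXu).
Qed.

Definition toggles_mixed_pairs (g : seq bool -> seq bool) : Prop :=
  forall A a b B,
    inv_parity (A ++ g [:: a; b] ++ B) = inv_parity (A ++ [:: a; b] ++ B) (+) (a (+) b).

Lemma rev_toggles_mixed_pairs : toggles_mixed_pairs rev.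
Proof. exact: inv_parity_swap2. Qed.

Lemma negb_toggles_mixed_pairs : toggles_mixed_pairs (map negb).
Proof. exact: inv_parity_negb2. Qed.

Lemma inv_parity_interleave g u0 bs :
  toggles_mixed_pairs g -> all (fun b => size b.1 == 2) bs ->
  inv_parity (interleave u0 [seq (g b.1, b.2) | b <- bs]) =
  inv_parity (interleave u0 bs) (+) odd (count id (flatten (map fst bs))).
Proof.
move=> g_toggles; rewrite -[interleave u0 _]cat0s -[interleave u0 bs]cat0s.
elim: bs [::] u0 => [|[X u] bs IH] A u0 /=; first by rewrite addbF.
case: X => [|a [|b []]] //= /IH {}IH.
rewrite !interleave_cons.
have := IH (A ++ u0 ++ g [:: a; b]) u; rewrite -!catA => ->.
have := g_toggles (A ++ u0) a b (interleave u bs); rewrite -!catA => ->.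
by rewrite !oddD !oddb !addbA.
Qed.

(** * Arrows, their directions and the invariant [phi] *)

Lemma count_mem_even_count (K : eqType) (p : pred K) (s : seq K) :
  (forall k, ~~ odd (count_mem k s)) -> ~~ odd (count p s).
Proof.
move=> even_s; rewrite -(permP (perm_count_undup s)) count_flatten -map_comp.
elim: (undup s) => //= k ks IH.
by rewrite count_nseq oddD oddM (negbTE (even_s k)) andbF.
Qed.

Definition occ (a : nat) (W : gword) : gword := [seq y <- W | lab y == a].

Definition mate (y : letter) : letter := (lab y, ~~ is_tail y, sgnb y).

Definition paired (W : gword) : Prop :=
  forall a, occ a W = [::] \/ exists2 y, lab y = a & occ a W = [:: y; mate y].

Lemma occ_cat a u v : occ a (u ++ v) = occ a u ++ occ a v.
Proof. exact: filter_cat. Qed.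

Lemma occ_eq_nil a w : (occ a w == [::]) = (a \notin map lab w).
Proof.
rewrite /occ -[_ == [::]]negbK -has_filter; congr negb.
by apply/hasP/mapP => -[y yw ya]; exists y => //; [apply/esym/eqP | rewrite ya].
Qed.

Lemma occ_nil_lab a w y : occ a w = [::] -> y \in w -> lab y != a.
Proof.
move=> occ0 wy; apply/eqP => ya.
have : y \in occ a w by rewrite mem_filter ya eqxx.
by rewrite occ0.
Qed.

Lemma size_occ_map_lab a w : size (occ a w) = count_mem a (map lab w).
Proof. by rewrite size_filter count_map; apply: eq_count => y /=; rewrite eq_sym. Qed.

Lemma paired_size_occ W a : paired W -> (size (occ a W) <= 2)%N.
Proof. by move=> /(_ a) [-> | [y _ ->]]. Qed.

Lemma paired_count_even W (p : pred nat) : paired W ->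
  ~~ odd (count (fun y => p (lab y)) W).
Proof.
move=> pW; rewrite -count_map; apply: count_mem_even_count => a.
by rewrite -size_occ_map_lab; case: (pW a) => [-> | [y _ ->]].
Qed.

Lemma gauss_wf_paired W : gauss_wf W -> paired W.
Proof.
move=> wfW a; case: (wfW a) => [none | [s [one_tail one_head two]]].
  by left; apply/eqP; rewrite -size_eq0 size_filter none.
right.
have count_mem_occ t : count_mem (a, t, s) (occ a W) = count_mem (a, t, s) W.
  rewrite count_filter; apply: eq_count => y /=.
  by case: (y =P _) => [-> /= | ]; rewrite ?eqxx.
move: (count_mem_occ true) (count_mem_occ false) (size_filter (fun y => lab y == a) W).
move: (filter_all (fun y => lab y == a) W).
rewrite one_tail one_head two -/(occ a W) {count_mem_occ one_tail one_head two}.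
case: (occ a W) => [|[[a1 t1] s1] [|[[a2 t2] s2] []]] //= /and3P[/eqP ea1 /eqP ea2 _].
rewrite /lab /= in ea1 ea2; subst a a2 => c1 c2 _.
exists (a1, t1, s1) => //; move: c1 c2; rewrite /mate /= !xpair_eqE !eqxx /=.
by case: t1; case: t2; case: s1; case: s2; case: s.
Qed.

Lemma paired_cons_split x W : paired (x :: W) ->
  exists w1 w2, [/\ W = w1 ++ mate x :: w2, lab x \notin map lab (w1 ++ w2)
                  & paired (w1 ++ w2)].
Proof.
move=> pW; have [|[y _]] := pW (lab x); rewrite /occ /= eqxx // => -[<-{y} occ_W].
have hasW : has (fun z => lab z == lab x) W by rewrite has_filter occ_W.
move: pW occ_W; case: (split_find hasW) => z w1 w2 zx nw1 pW {hasW}.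
have occ_w1 : occ (lab x) w1 = [::] by apply/eqP; move: nw1; rewrite has_filter negbK.
rewrite filter_cat filter_rcons zx -/(occ _ w1) occ_w1 -/(occ _ w2) => -[ez occ_w2].
subst z; exists w1, w2; split; first by rewrite cat_rcons.
  by rewrite -occ_eq_nil occ_cat occ_w1 occ_w2.
move=> a; case: (eqVneq a (lab x)) => [-> | ne_ax].
  by left; rewrite occ_cat occ_w1 occ_w2.
have lab_x : (lab x == a) = false by rewrite eq_sym (negbTE ne_ax).
suff -> : occ a (w1 ++ w2) = occ a (x :: rcons w1 (mate x) ++ w2) by apply: pW.
by rewrite /occ /= lab_x !filter_cat filter_rcons /= lab_x.
Qed.

Lemma paired_mate u v y : paired (u ++ v) -> y \in u -> lab y \in map lab v ->
  occ (lab y) u = [:: y] /\ occ (lab y) v = [:: mate y].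
Proof.
move=> pW yu; rewrite -[_ \in _]negbK -occ_eq_nil.
have : y \in occ (lab y) u by rewrite mem_filter eqxx.
case: (pW (lab y)) => [|[z _]]; rewrite occ_cat.
  by case: (occ _ u).
case: (occ _ u) => [|z1 [|z2 r]] //=.
  by case=> -> ->; rewrite mem_seq1 => /eqP ->.
by case: r => [|? ?] [_ _] // ->.
Qed.

Definition fwd (W : gword) (a : nat) : bool := is_tail (head dlet (occ a W)).

Definition mark (W : gword) (y : letter) : bool := fwd W (lab y).

Definition marks (W : gword) : seq bool := map (mark W) W.

Definition phi (W : gword) : bool := inv_parity (marks W).

Lemma map_mark_eq_in W W' s : {in s, forall y, occ (lab y) W = occ (lab y) W'} ->
  map (mark W) s = map (mark W') s.
Proof. by move=> eq_occ; apply/eq_in_map => y /eq_occ; rewrite /mark /fwd => ->. Qed.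

(** * Parity of v21 + v22 equals [phi] *)

Lemma v2_kernel_labs a b c d : v2_kernel a b c d -> lab a = lab c /\ lab b = lab d.
Proof. by case/and3P => /eqP-> /eqP->. Qed.

Lemma v2_kernel_drop u z v : lab z \notin map lab (u ++ v) ->
  incr_xor4 v2_kernel (u ++ z :: v) = incr_xor4 v2_kernel (u ++ v).
Proof.
move=> zuv; apply: (incr_xor4_drop (D := [pred y | lab y != lab z])).
- by apply/allP => y yuv; apply: contraNneq zuv => <-; apply: map_f.
- move=> a b c _ Db _; apply/negbTE/negP => /v2_kernel_labs[zb _].
  by rewrite inE -zb eqxx in Db.
- move=> a b c _ _ Dc; apply/negbTE/negP => /v2_kernel_labs[_ zc].
  by rewrite inE -zc eqxx in Dc.
- move=> a b c Da _ _; apply/negbTE/negP => /v2_kernel_labs[az _].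
  by rewrite inE az eqxx in Da.
move=> a b c _ Db _; apply/negbTE/negP => /v2_kernel_labs[_ bz].
by rewrite inE bz eqxx in Db.
Qed.

(* In the word [x :: w1 ++ mate x :: w2], the arrows interlaced with the arrow of
   [x] whose direction is opposite to that of [x]. *)
Definition opp_links (x : letter) (w1 w2 : gword) : bool :=
  odd (count (fun y => (lab y \in map lab w2) && (is_tail x (+) is_tail y)) w1).

Lemma count_occ (p : pred letter) a w : (forall y, p y -> lab y = a) ->
  count p (occ a w) = count p w.
Proof.
move=> pa; rewrite count_filter; apply: eq_count => y /=.
by case py: (p y); rewrite // pa // eqxx.
Qed.

Lemma incr_xor3_first_arrow x w1 w2 : lab x \notin map lab (w1 ++ w2) ->
  {in w1, forall y, lab y \in map lab w2 -> occ (lab y) w2 = [:: mate y]} ->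
  incr_xor3 (v2_kernel x) (w1 ++ mate x :: w2) = opp_links x w1 w2.
Proof.
rewrite map_cat mem_cat negb_or => /andP[x_w1 x_w2].
have lab_ne w c : lab x \notin map lab w -> c \in w -> (lab x == lab c) = false.
  by move=> xw cw; apply: contraNF xw => /eqP->; apply: map_f.
elim: w1 x_w1 => [|y w1 IH] /= x_w1 mates.
  by rewrite incr_xor2_eq0 ?incr_xor3_eq0 // => [a b c _ w2b _|c d w2c _];
    rewrite /v2_kernel (lab_ne w2).
move: x_w1; rewrite inE negb_or => /andP[_ x_w1].
rewrite IH => [|//|z w1z]; last by apply: mates; rewrite inE w1z orbT.
rewrite incr_xor2_pivot => [|c d w1c|c d w2c _]; last 2 first.
- by rewrite /v2_kernel (lab_ne w1).
- by rewrite /v2_kernel (lab_ne w2).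
rewrite /opp_links /= oddD; congr (_ (+) _).
rewrite /incr_xor1 -(count_occ (a := lab y)) => [|d /v2_kernel_labs[_ ->] //].
case: (boolP (lab y \in map lab w2)) => [y_w2 | /negbTE y_w2] /=.
  rewrite (mates y (mem_head _ _) y_w2) /= addn0 /v2_kernel /mate /= !eqxx /=.
  by case: (is_tail x); case: (is_tail y).
by have /eqP -> : occ (lab y) w2 == [::] by rewrite occ_eq_nil y_w2.
Qed.

Lemma incr_xor4_split x w1 w2 :
  lab x \notin map lab (w1 ++ w2) -> paired (w1 ++ w2) ->
  incr_xor4 v2_kernel (x :: w1 ++ mate x :: w2) =
  incr_xor4 v2_kernel (w1 ++ w2) (+) opp_links x w1 w2.
Proof.
move=> x_V pV; rewrite /= v2_kernel_drop // incr_xor3_first_arrow //.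
  exact: addbC.
by move=> y w1y y_w2; case: (paired_mate pV w1y y_w2).
Qed.

Lemma phi_split x w1 w2 :
  lab x \notin map lab (w1 ++ w2) -> paired (w1 ++ w2) ->
  phi (x :: w1 ++ mate x :: w2) = phi (w1 ++ w2) (+) opp_links x w1 w2.
Proof.
set V := w1 ++ w2; set W := x :: _ => x_V pV.
have occ_W a : a != lab x -> occ a W = occ a V.
  move=> ne_ax; have lab_x : (lab x == a) = false by rewrite eq_sym (negbTE ne_ax).
  by rewrite /occ /= lab_x filter_cat /= lab_x -filter_cat.
have marks_W : marks W = is_tail x :: map (mark V) w1 ++ is_tail x :: map (mark V) w2.
  have mark_x : mark W x = is_tail x by rewrite /mark /fwd /occ /= eqxx.
  have eq_V : {in V, forall y, occ (lab y) W = occ (lab y) V}.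
    by move=> y Vy; apply: occ_W; apply: contraNneq x_V => <-; apply: map_f.
  rewrite /marks /= map_cat /= mark_x [mark W (mate x)]mark_x.
  by congr (_ :: _ ++ _ :: _); apply: map_mark_eq_in => y wy; apply: eq_V;
    rewrite mem_cat wy ?orbT.
rewrite /phi marks_W inv_parity_insert -map_cat count_map; congr (_ (+) _).
set in_w2 := [pred y : letter | lab y \in map lab w2].
rewrite -size_filter -(count_predC in_w2) !count_filter oddD.
have even_rest :
    ~~ odd (count (predI (predC in_w2) (preim (mark V) (addb^~ (is_tail x)))) w1).
  have := paired_count_even (fun b => (b \notin map lab w2) && (fwd V b (+) is_tail x)) pV.
  rewrite count_cat (@eq_in_count _ _ pred0 w2) ?count_pred0 ?addn0 // => y w2y.
  by rewrite /= map_f.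
rewrite (negbTE even_rest) addbF /opp_links; congr odd; apply: eq_in_count => y w1y /=.
case: (boolP (lab y \in map lab w2)) => //= y_w2; rewrite addbC.
have [occ_w1 occ_w2] := paired_mate pV w1y y_w2.
by rewrite /mark /fwd occ_cat occ_w1.
Qed.

Lemma incr_xor4_v2_kernel_phi W : paired W -> incr_xor4 v2_kernel W = phi W.
Proof.
have [n] := ubnP (size W); elim: n W => // n IH [|x W] // /ltnSE-le_Wn pW.
have [w1 [w2 [eW x_V pV]]] := paired_cons_split pW; subst W.
rewrite incr_xor4_split // phi_split // IH //.
by move: le_Wn; rewrite /= !size_cat /=; lia.
Qed.

(** * Invariance of [phi] under the moves *)

Lemma phi_relabel W1 W2 : relabel_move W1 W2 -> phi W2 = phi W1.
Proof.
move=> [f [inj_f ->]]; congr inv_parity; rewrite /marks -map_comp.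
apply/eq_in_map => y _ /=; rewrite /mark /fwd /occ filter_map.
rewrite (@eq_filter _ _ (fun z => lab z == lab y)) => [|z]; last first.
  by rewrite /= (inj_eq inj_f).
by case: [seq z <- W1 | lab z == lab y].
Qed.

Lemma occ_drop b u X v : b \notin map lab X -> occ b (u ++ X ++ v) = occ b (u ++ v).
Proof. by rewrite -occ_eq_nil !occ_cat => /eqP->. Qed.

Lemma phi_R1 W1 W2 : paired W1 -> R1_move W1 W2 -> phi W2 = phi W1.
Proof.
move=> pW [u [v [a [t [s [eW1 ->]]]]]]; subst W1; set X := [:: _; _] in pW *.
have occ_uv : occ a (u ++ v) = [::].
  apply/size0nil; have := paired_size_occ a pW.
  by rewrite !occ_cat !size_cat [occ a X]/occ /= eqxx /= /letter; lia.
rewrite /phi /marks !map_cat /= inv_parity_dup -!map_cat.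
congr inv_parity; apply: (map_mark_eq_in (W := u ++ v)) => y uvy.
have y_X : lab y \notin map lab X by rewrite /= !inE orbb (occ_nil_lab occ_uv uvy).
by rewrite -(occ_drop u v y_X).
Qed.

Lemma occ_pair2 c p A B : lab A != lab B -> occ c (pair2 p A B) = occ c [:: A; B].
Proof.
move=> AB; case: p => //; rewrite /occ /=.
by case: (lab A =P c) => [<-|//]; rewrite eq_sym (negbTE AB).
Qed.

Lemma map_pair2 (U : Type) (f : letter -> U) p A B :
  map f (pair2 p A B) = if p then [:: f A; f B] else [:: f B; f A].
Proof. by case: p. Qed.

Lemma phi_R2 W1 W2 : paired W1 -> R2_move W1 W2 -> phi W2 = phi W1.
Proof.
move=> pW [u [v [w [a [b [tau [s [p [q [ab [eW1 ->]]]]]]]]]]]; subst W1.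
set X := pair2 p _ _ in pW *; set Y := pair2 q _ _ in pW *.
have ba : b != a by rewrite eq_sym.
have occ_X c : occ c X = occ c [:: (a, tau, s); (b, tau, ~~ s)] by rewrite occ_pair2.
have occ_Y c : occ c Y = occ c [:: (a, ~~ tau, s); (b, ~~ tau, ~~ s)].
  by rewrite occ_pair2.
have gaps c : c \in [:: a; b] -> [/\ occ c u = [::], occ c v = [::] & occ c w = [::]].
  move=> c_ab; have := paired_size_occ c pW.
  rewrite !occ_cat !size_cat occ_X occ_Y.
  move: c_ab; rewrite !inE => /orP[]/eqP->;
    rewrite [occ _ [:: _; _]]/occ /= eqxx ?(negbTE ab) ?(negbTE ba) /= => le2;
    by split; apply/size0nil; move: le2; rewrite /letter; lia.
have [u_a v_a w_a] := gaps a (mem_head _ _).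
have [u_b v_b w_b] : [/\ occ b u = [::], occ b v = [::] & occ b w = [::]].
  by apply: gaps; rewrite !inE eqxx orbT.
set W1 := u ++ X ++ v ++ Y ++ w.
have mark_a t s' : mark W1 (a, t, s') = tau.
  by rewrite /mark /fwd !occ_cat u_a v_a occ_X /occ /= eqxx.
have mark_b t s' : mark W1 (b, t, s') = tau.
  by rewrite /mark /fwd !occ_cat u_b v_b occ_X /occ /= eqxx (negbTE ab).
rewrite /phi /marks !map_cat !map_pair2 !mark_a !mark_b !if_same /=.
rewrite [RHS]inv_parity_dup [in RHS]catA [RHS]inv_parity_dup -catA -!map_cat.
congr inv_parity; apply: map_mark_eq_in => y uvwy.
have [ya yb] : lab y != a /\ lab y != b.
  by split; apply: occ_nil_lab uvwy; rewrite !occ_cat ?u_a ?v_a ?w_a ?u_b ?v_b ?w_b.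
rewrite !occ_cat occ_X occ_Y /occ /= !(eq_sym _ (lab y)) (negbTE ya) (negbTE yb).
by rewrite -!/(occ _ _).
Qed.

Lemma phi_block_move g W1 W2 u0 bs : toggles_mixed_pairs g ->
  all (fun b => size b.1 == 2) bs ->
  (forall a, ~~ odd (count_mem a (map lab (flatten (map fst bs))))) ->
  W1 = interleave u0 bs ->
  marks W2 = interleave (map (mark W1) u0)
               [seq (g (map (mark W1) b.1), map (mark W1) b.2) | b <- bs] ->
  phi W2 = phi W1.
Proof.
move=> g_toggles size_bs even_bs eW1 eW2.
set mbs := [seq (map (mark W1) b.1, map (mark W1) b.2) | b <- bs].
rewrite /phi eW2 (_ : [seq _ | b <- bs] = [seq (g c.1, c.2) | c <- mbs]); last first.
  by rewrite -map_comp.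
rewrite (inv_parity_interleave _ g_toggles); last first.
  by rewrite all_map; apply: sub_all size_bs => b /=; rewrite size_map.
rewrite -map_interleave -eW1 -/(marks W1) -[RHS]addbF; congr (_ (+) _).
rewrite -map_comp (map_comp (map (mark W1)) fst) -map_flatten count_map.
apply/negbTE; rewrite (eq_count (a2 := preim lab (fwd W1))) // -count_map.
exact: count_mem_even_count.
Qed.

Lemma occ_rev a X : uniq (map lab X) -> occ a (rev X) = occ a X.
Proof.
move=> uX; rewrite /occ filter_rev; have := size_occ_map_lab a X.
by rewrite count_uniq_mem // /occ; case: filter => [|? [|? ?]] //=; case: (_ \in _).
Qed.

Lemma size_pair2 p A B : size (pair2 p A B) = 2.
Proof. by case: p. Qed.

Lemma uniq_lab_pair2 p A B : uniq (map lab (pair2 p A B)) = (lab A != lab B).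
Proof. by case: p; rewrite /= inE ?andbT // eq_sym. Qed.

Lemma count_lab_pair2 c p A B :
  count_mem c (map lab (pair2 p A B)) = ((lab A == c) + (lab B == c))%N.
Proof. by case: p; rewrite /= addn0 // addnC. Qed.

Lemma phi_R3 W1 W2 : R3_move W1 W2 -> phi W2 = phi W1.
Proof.
move=> [x [y [z [sx [sy [sz [oT [oM [oB [X1 [X2 [X3 [u0 [u1 [u2 [u3
  [uniq_xyz [_ [_ [perm_X [eW1 eW2]]]]]]]]]]]]]]]]]]]]].
set bs := [:: (X1, u1); (X2, u2); (X3, u3)].
have {}eW1 : W1 = interleave u0 bs by rewrite eW1 /interleave /= cats0 -!catA.
have {}eW2 : W2 = interleave u0 [seq (rev b.1, b.2) | b <- bs].
  by rewrite eW2 /interleave /= cats0 -!catA.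
have blocks : all (fun X => (size X == 2) && uniq (map lab X)) (map fst bs).
  rewrite (perm_all _ perm_X) /= !size_pair2 !uniq_lab_pair2 /=.
  by move: uniq_xyz; rewrite /= !inE negb_or andbT => /andP[/andP[-> ->] ->].
apply: (phi_block_move rev_toggles_mixed_pairs _ _ eW1).
- by move: blocks; rewrite all_map; apply: sub_all => b /andP[].
- move=> a; rewrite (permP (perm_map lab (perm_flatten perm_X))) /= !map_cat.
  rewrite !count_cat !count_lab_pair2 /lab /=.
  by case: (x == a); case: (y == a); case: (z == a).
have occ_W c : occ c W2 = occ c W1.
  rewrite eW1 eW2 /occ !filter_interleave -map_comp; congr interleave.
  apply/eq_in_map => -[X u] bsXu /=; rewrite -!/(occ c _) occ_rev //.
  by have /(allP blocks)/andP[] := map_f fst bsXu.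
rewrite /marks (@map_mark_eq_in W2 W1 W2) => [|w _]; last exact: occ_W.
rewrite eW2 map_interleave -map_comp; congr interleave.
by apply: eq_map => -[X u] /=; rewrite map_rev.
Qed.

Definition flip_on (L : seq nat) (y : letter) : letter :=
  if lab y \in L then flip y else y.

Lemma marks_flip_on L W :
  marks (map (flip_on L) W) = [seq (lab y \in L) (+) mark W y | y <- W].
Proof.
rewrite /marks -map_comp; apply/eq_in_map => y Wy /=.
have lab_flip_on z : lab (flip_on L z) = lab z by rewrite /flip_on; case: ifP.
rewrite /mark /fwd lab_flip_on /occ filter_map.
rewrite (@eq_filter _ _ (fun z => lab z == lab y)) => [|z]; last first.
  by rewrite /= lab_flip_on.
have : y \in [seq z <- W | lab z == lab y] by rewrite mem_filter eqxx.
have : all (fun z => lab z == lab y) [seq z <- W | lab z == lab y].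
  exact: filter_all.
case: [seq z <- W | lab z == lab y] => [|z s] //= /andP[/eqP zy _] _.
by rewrite /flip_on zy; case: (lab y \in L).
Qed.

Lemma phi_bandpass W1 W2 : paired W1 -> bandpass_move W1 W2 -> phi W2 = phi W1.
Proof.
move=> pW [x11 [x12 [x21 [x22 [s [p [q [X1 [X2 [X3 [X4 [u0 [u1 [u2 [u3 [u4
  [_ [perm_X [eW1 eW2]]]]]]]]]]]]]]]]]]].
set L := [:: x11; x12; x21; x22].
set bs := [:: (X1, u1); (X2, u2); (X3, u3); (X4, u4)].
have {}eW1 : W1 = interleave u0 bs by rewrite eW1 /interleave /= cats0 -!catA.
have {}eW2 : W2 = interleave u0 [seq (map flip b.1, b.2) | b <- bs].
  by rewrite eW2 /interleave /= cats0 -!catA.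
have count_blocks a :
    count_mem a (map lab (flatten (map fst bs))) = (count_mem a L).*2.
  rewrite (permP (perm_map lab (perm_flatten perm_X))) /= !map_cat !count_cat.
  by rewrite !count_lab_pair2 /lab /=; lia.
have size_blocks : all (fun b => size b.1 == 2) bs.
  by rewrite -(all_map fst (fun X => size X == 2)) (perm_all _ perm_X) /= !size_pair2.
have in_blocks X y : X \in map fst bs -> y \in X -> y \in flatten (map fst bs).
  by move=> bsX Xy; apply/flattenP; exists X.
have lab_blocks : {in flatten (map fst bs), forall y, lab y \in L}.
  move=> y y_blocks; rewrite -has_pred1 has_count -double_gt0 -count_blocks.
  by rewrite -has_count has_pred1 map_f.
have lab_gaps : {in u0 ++ flatten (map snd bs), forall y, lab y \notin L}.
  move=> y y_gaps; apply/negP => yL.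
  have := paired_size_occ (lab y) pW; rewrite eW1 size_filter count_interleave.
  rewrite (eq_count (a2 := preim lab (pred1 (lab y)))) // -count_map count_blocks.
  have : 0 < count_mem (lab y) L by rewrite -has_count has_pred1.
  have : 0 < count (fun z => lab z == lab y) (u0 ++ flatten (map snd bs)).
    by rewrite -has_count; apply/hasP; exists y => /=.
  by rewrite /gword; lia.
have flipW : W2 = map (flip_on L) W1.
  rewrite eW1 eW2 (map_interleave_in (g := id) (h := map flip)) => [|y /lab_gaps|X bsX].
  - by rewrite map_id; congr interleave; apply: eq_map => b; rewrite !map_id.
  - by rewrite /flip_on => /negbTE->.
  by rewrite map_id; apply/eq_in_map => y Xy; rewrite /flip_on lab_blocks ?(in_blocks X).
apply: (phi_block_move negb_toggles_mixed_pairs size_blocks _ eW1).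
  by move=> a; rewrite count_blocks odd_double.
rewrite flipW marks_flip_on [X in map _ X]eW1.
apply: map_interleave_in => [y /lab_gaps/negbTE-> // | X bsX].
by rewrite -map_comp; apply/eq_in_map => y Xy /=; rewrite lab_blocks ?(in_blocks X).
Qed.

Lemma phi_elem_move W1 W2 : paired W1 -> elem_move W1 W2 -> phi W2 = phi W1.
Proof.
move=> pW [|[|[|[|]]]]; [exact: phi_relabel | exact: phi_R1 | exact: phi_R2 |
  exact: phi_R3 | exact: phi_bandpass].
Qed.

Lemma phi_move_step W1 W2 : move_step W1 W2 -> phi W1 = phi W2.
Proof.
by case=> /gauss_wf_paired pW1 /gauss_wf_paired pW2
  [/(phi_elem_move pW1) | /(phi_elem_move pW2)].
Qed.

Lemma phi_bp_equiv K1 K2 : bp_equiv K1 K2 -> phi K1 = phi K2.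
Proof. by elim=> // W1 W2 W3 /phi_move_step ->. Qed.

Local Open Scope ring_scope.

Theorem theorem3 (K1 K2 : gword) :
  gauss_wf K1 -> gauss_wf K2 -> bp_equiv K1 K2 ->
  (v21 K1 + v22 K1 = v21 K2 + v22 K2 %[mod 2])%Z.
Proof.
move=> /gauss_wf_paired pK1 /gauss_wf_paired pK2 eqK; apply: oddz_eq_mod2.
by rewrite !oddz_v2 !incr_xor4_v2_kernel_phi // (phi_bp_equiv eqK).
Qed.
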